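(* Let $P$ be a finite bounded poset with minimum $\hat{0}$ and maximum $\hat{1}$, and let $h$ be a height function on $P$. Then $$\mathsf{Z}_{P,h}([-1]_q)=q^{-h(\hat{0})-h(\hat{1})}\,\mu_P(\hat{0},\hat{1}),$$ where $\mu_P$ is the Möbius function of $P$.
   Context: $q$ is an indeterminate; $[n]_q=(q^n-1)/(q-1)$ for $n\in\mathbb{Z}$ (so $[-1]_q=-q^{-1}$). A height function is $h:P\to\mathbb{N}$ with $h(x)<h(y)$ whenever $y$ covers $x$. For a tuple $a$ of $k$ distinct nonnegative integers, $\mathsf{E}_a\in\mathbb{Q}(q)[x]$ is the unique polynomial with $\mathsf{E}_a([n]_q)=\sum_{m\in\mathbb{N}^k,\sum m_i=n}q^{\sum a_im_i}$ for $n\ge0$. The $q$-Zeta polynomial is $\mathsf{Z}_{P,h}(x)=\sum_{k\ge1}\sum_{c_1<\cdots<c_k\text{ in }P}q^{\sum_i h(c_i)}\mathsf{E}_{(h(c_1),\dots,h(c_k))}((x-[k+1]_q)/q^{k+1})$; it is the unique polynomial with $\mathsf{Z}_{P,h}([n]_q)=\sum_{e_1\le\cdots\le e_{n-1}}q^{\sum_j h(e_j)}$ for all $n\ge2$. *)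

From HB Require Import structures.
From mathcomp Require Import all_boot all_order all_algebra.
From mathcomp Require Import fraction.
Set Implicit Arguments. Unset Strict Implicit. Unset Printing Implicit Defensive.
Import Order.TTheory GRing.Theory Num.Theory.

Definition Qq : fieldType := {fraction {poly rat}}.
Definition qvar : Qq := tofrac ('X : {poly rat}).

Definition qint (n : int) : Qq := ((qvar ^ n - 1) / (qvar - 1))%R.

Section Poset.
Context {disp : Order.disp_t} {P : finPOrderType disp}.
Local Open Scope order_scope.

Definition covers (x y : P) : bool :=
  (x < y) && [forall z : P, ~~ ((x < z) && (z < y))].

Definition is_height (h : P -> nat) : Prop :=
  forall x y : P, covers x y -> (h x < h y)%N.

(* Defined by recursion with fuel; fuel
   #|P| suffices since strict chains in P have at most #|P| elements. *)
Fixpoint mobius_rec (n : nat) (x y : P) : int :=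
  match n with
  | 0 => 0%R
  | n'.+1 =>
      if x == y then 1%R
      else if x <= y then
        (- \sum_(z : P | ((x <= z)%O && (z < y)%O)) mobius_rec n' x z)%R
      else 0%R
  end.
Definition mobius (x y : P) : int := mobius_rec #|P| x y.

Definition multichain_sum (h : P -> nat) (k : nat) : Qq :=
  (\sum_(e : k.-tuple P | sorted <=%O (tval e))
      qvar ^+ (\sum_(x <- tval e) h x)%N)%R.

Definition is_qZeta (h : P -> nat) (Z : {poly Qq}) : Prop :=
  forall n : nat, (2 <= n)%N -> Z.[qint n%:Z]%R = multichain_sum h n.-1.
End Poset.

From HB Require Import structures.
From mathcomp Require Import all_boot all_order all_algebra.
From mathcomp Require Import fraction ring.
Set Implicit Arguments. Unset Strict Implicit. Unset Printing Implicit Defensive.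
Import Order.TTheory GRing.Theory Num.Theory.
Local Open Scope ring_scope.

(* The affine substitution t = (q - 1) x + 1 sends [n]_q to q^n for every
   integer n, so it suffices to study polynomials in t.  Let F_n(y) be the
   weighted count of multichains 0 = e_0 <= e_1 <= ... <= e_n = y, with weight
   q^(h e_1 + ... + h e_n); that is, F_n(y) is the y-coordinate of
   delta_0 zeta^n for the weighted zeta matrix zeta(z, y) = q^(h y) [z <= y].
   Then F_n(y) = W_y(q^n) for a polynomial W_y of degree at most h(y), built
   by induction on y from the q-difference equation
     W_y(q t) = q^(h y) (W_y(t) + sum_(z < y) W_z(t)),   W_y(1) = [y = 0],
   which is solvable because the W_z with z < y have degree < h(y).  Taking
   t = q^-1 turns the equation into the recursion defining mu(0, y), so
   W_y(q^-1) = q^(-h 0) mu(0, y), and Z = q^(-h 1) W_1((q - 1) x + 1). *)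

Lemma qvar_neq0 : qvar != 0.
Proof. by rewrite /qvar tofrac_eq0 polyX_eq0. Qed.

Lemma qvar_expn_inj : injective (fun n : nat => qvar ^+ n).
Proof.
move=> m n /=; rewrite /qvar -!tofracXn => /eqP; rewrite tofrac_eq => /eqP E.
by have := congr1 (fun p : {poly rat} => size p) E; rewrite !size_polyXn => -[].
Qed.

Lemma qvar_sub1_neq0 : qvar - 1 != 0.
Proof. by rewrite subr_eq0; apply/eqP => /(@qvar_expn_inj 1 0). Qed.

Definition qshift : {poly Qq} := (qvar - 1) *: 'X + 1.

Lemma horner_qshift (n : int) : qshift.[qint n] = qvar ^ n.
Proof.
by rewrite /qshift hornerD hornerZ hornerX hornerC mulrC divfK ?qvar_sub1_neq0 ?subrK.
Qed.

Lemma qint_nat_inj : injective (fun n : nat => qint n%:Z).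
Proof.
by move=> m n /= /(congr1 (horner qshift)); rewrite !horner_qshift => /qvar_expn_inj.
Qed.

Lemma poly_eq0_on_injective (R : idomainType) (p : {poly R}) (f : nat -> R) :
  injective f -> (forall n, root p (f n)) -> p = 0.
Proof.
move=> f_inj p_f; apply: (@roots_geq_poly_eq0 _ _ [seq f i | i <- iota 0 (size p)]).
- by apply/allP => _ /mapP [i _ ->].
- by rewrite map_inj_uniq ?iota_uniq.
- by rewrite size_map size_iota.
Qed.

Section QDifferenceEquation.
Variables (F : fieldType) (a : F) (b : nat).
Hypothesis a_expn_neq : forall i, (i < b)%N -> a ^+ i != a ^+ b.

(* Comparing coefficients of t^i forces W_i = a^b G_i / (a^i - a^b) for
   i < b, while the coefficient of t^b is free and fits the value at 1. *)
Lemma qdifference_eq_solvable (G : {poly F}) (c : F) : (size G <= b)%N ->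
  exists W : {poly F}, [/\ (size W <= b.+1)%N, W.[1] = c &
    forall t, W.[a * t] = a ^+ b * (W.[t] + G.[t])].
Proof.
move=> sG.
pose S : {poly F} := \poly_(i < b) (a ^+ b * G`_i / (a ^+ i - a ^+ b)).
have S_eq t : S.[a * t] = a ^+ b * (S.[t] + \sum_(i < b) G`_i * t ^+ i).
  rewrite !horner_poly mulrDr !mulr_sumr -big_split /=; apply: eq_bigr => i _.
  have ne : a ^+ i - a ^+ b != 0 by rewrite subr_eq0 a_expn_neq.
  by rewrite exprMn; field.
exists (S + (c - S.[1]) *: 'X^b); split.
- rewrite (leq_trans (size_polyD _ _)) // geq_max (leq_trans (size_poly _ _)) //=.
  by rewrite (leq_trans (size_scale_leq _ _)) // size_polyXn.
- by rewrite hornerD hornerZ hornerXn expr1n mulr1 addrC subrK.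
move=> t; rewrite !hornerD !hornerZ !hornerXn exprMn (horner_coef_wide _ sG) S_eq.
ring.
Qed.

End QDifferenceEquation.

Section FinPOrder.
Context {disp : Order.disp_t} {P : finPOrderType disp}.

Definition card_below (y : P) : nat := #|[set z : P | (z < y)%O]|.

Lemma card_below_lt (z y : P) : (z < y)%O -> (card_below z < card_below y)%N.
Proof.
move=> zy; apply: proper_card; apply/properP; split.
  by apply/subsetP => w; rewrite !inE => /lt_trans; apply.
by exists z; rewrite !inE ?ltxx.
Qed.

Lemma card_below_ltT (y : P) : (card_below y < #|P|)%N.
Proof.
rewrite -cardsT; apply: proper_card; rewrite properT; apply/eqP => E.
by have : y \in [set: P] by []; rewrite -E inE ltxx.
Qed.

Lemma height_lt (h : P -> nat) (z y : P) : is_height h -> (z < y)%O -> (h z < h y)%N.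
Proof.
move=> hh; have [k] := ubnP (card_below y - card_below z).
elim: k z y => [//|k IHk] z y; rewrite ltnS => Hk zy.
have [/hh //|] := boolP (covers z y).
rewrite /covers zy negb_forall => /existsP [w]; rewrite negbK => /andP [zw wy].
have [czw cwy] := (card_below_lt zw, card_below_lt wy).
apply: (@ltn_trans (h w)); apply: IHk => //; apply: leq_trans Hk.
  by rewrite ltn_sub2r // (ltn_trans czw).
by rewrite ltn_sub2l // (ltn_trans czw).
Qed.

Lemma mobius_rec_stable (m n : nat) (x y : P) :
  (card_below y < m)%N -> (card_below y < n)%N -> mobius_rec m x y = mobius_rec n x y.
Proof.
elim: m n x y => [//|m IHm] [//|n] x y ym yn /=.
case: eqP => // _; case: ifP => // _; congr (- _); apply: eq_bigr => z /andP [_ zy].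
by apply: IHm; apply: leq_trans (card_below_lt zy) _.
Qed.

Lemma mobiusE (x y : P) : mobius x y =
  if x == y then 1 else if (x <= y)%O then
    - \sum_(z : P | (x <= z)%O && (z < y)%O) mobius x z else 0.
Proof.
rewrite {1}/mobius; have := card_below_ltT y; case: #|P| => [//|n] yn /=.
case: eqP => // _; case: ifP => // _; congr (- _); apply: eq_bigr => z /andP [_ zy].
by apply: mobius_rec_stable (card_below_ltT z); apply: leq_trans (card_below_lt zy) _.
Qed.

End FinPOrder.

Section BoundedPOrder.
Variables (disp : Order.disp_t) (P : finTBPOrderType disp) (h : P -> nat).

Lemma sum_mobius_bot (y : P) :
  \sum_(z | (z <= y)%O) mobius \bot%O z = (y == \bot%O)%:R.
Proof.
have [->|yn0] := eqVneq y \bot%O.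
  rewrite (big_pred1 \bot%O) ?mobiusE ?eqxx // => z.
  by rewrite le_eqVlt ltx0 orbF.
rewrite (bigD1 y) //= mobiusE eq_sym (negPf yn0) le0x addrC.
apply/eqP; rewrite subr_eq0; apply/eqP/eq_bigl => z.
by rewrite le0x lt_neqAle andbC.
Qed.

Lemma mobius_bot_of_rec (y : P) (w : Qq) :
  (y == \bot%O)%:R =
    qvar ^+ h y * (w + \sum_(z | (z < y)%O) qvar ^- h \bot%O * (mobius \bot%O z)%:~R) ->
  w = qvar ^- h \bot%O * (mobius \bot%O y)%:~R.
Proof.
rewrite -mulr_sumr -rmorph_sum /=; set S := \sum_(z | _) _ => E.
have mu_y : mobius \bot%O y = (y == \bot%O)%:R - S.
  rewrite -sum_mobius_bot (bigD1 y) //= (eq_bigl (fun z => (z < y)%O)) ?addrK //.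
  by move=> z; rewrite lt_neqAle andbC.
have qh_neq0 : qvar ^+ h y != 0 by rewrite expf_neq0 ?qvar_neq0.
rewrite mu_y rmorphB /=; have [yb|yn0] := eqVneq y \bot%O; move: E.
  have -> : S = 0 by rewrite /S big_pred0 // => z; rewrite yb ltx0.
  move: qh_neq0; rewrite yb eqxx /= !rmorph0 subr0 mulr0 addr0 rmorph1 mulr1 => qh_neq0 E.
  by apply: (mulfI qh_neq0); rewrite mulfV // -E.
rewrite (negPf yn0) !mulr0n rmorph0 sub0r mulrN => /esym/eqP.
by rewrite mulf_eq0 (negPf qh_neq0) addr_eq0 => /eqP.
Qed.

Definition chain_sum_below (k : nat) (y : P) : Qq :=
  \sum_(e : k.-tuple P | sorted >=%O e && all (fun x => (x <= y)%O) e)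
    qvar ^+ (\sum_(x <- e) h x)%N.

Lemma multichain_sum_top (k : nat) : multichain_sum h k = chain_sum_below k \top%O.
Proof.
have rev_inj : injective (@rev_tuple k P).
  by move=> s t /(congr1 val) /(congr1 rev); rewrite !revK => /val_inj.
rewrite /multichain_sum (reindex_inj rev_inj); apply: eq_big => [e|e _] /=.
  by rewrite rev_sorted; under eq_all do rewrite lex1; rewrite all_predT andbT.
by rewrite big_rev.
Qed.

Lemma chain_sum_below0 (y : P) : chain_sum_below 0 y = 1.
Proof.
rewrite /chain_sum_below (big_pred1 [tuple]) ?big_nil ?expr0 // => e.
by rewrite tuple0 /=; apply/esym/eqP.
Qed.

Lemma chain_sum_belowS (k : nat) (y : P) :
  chain_sum_below k.+1 y = \sum_(x | (x <= y)%O) qvar ^+ h x * chain_sum_below k x.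
Proof.
rewrite /chain_sum_below (reindex (fun p : P * k.-tuple P => [tuple of p.1 :: p.2])) /=.
  under [RHS]eq_bigr => x _ do rewrite mulr_sumr.
  rewrite pair_big_dep; apply: eq_big => [[x t]|[x t] _] /=; last first.
    by rewrite big_cons exprD.
  rewrite (path_sortedE ge_trans).
  apply/and3P/and3P => [[/andP [tx st] xy _] | [xy st tx]]; split=> //.
    by apply/andP.
  by apply/allP => z /(allP tx) zx; apply: le_trans zx xy.
exists (fun e => (thead e, behead_tuple e)) => [[x t] _|e _] /=.
  by congr pair; apply: val_inj.
by rewrite [RHS](tuple_eta e).
Qed.

Fixpoint zeta_iter (n : nat) (y : P) : Qq :=
  if n is n'.+1 then qvar ^+ h y * \sum_(z | (z <= y)%O) zeta_iter n' z
  else (y == \bot%O)%:R.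

Lemma zeta_iterS_chain_sum (k : nat) (y : P) :
  zeta_iter k.+1 y = qvar ^+ h y * chain_sum_below k y.
Proof.
elim: k y => [|k IHk] y.
  rewrite /= chain_sum_below0 (bigD1 \bot%O) ?le0x //= eqxx big1 ?addr0 // => z.
  by case/andP => _ /negPf ->.
by rewrite chain_sum_belowS; congr (_ * _); apply: eq_bigr => z _; exact: IHk.
Qed.

Lemma zeta_iterS_split (n : nat) (y : P) :
  zeta_iter n.+1 y = qvar ^+ h y * (zeta_iter n y + \sum_(z | (z < y)%O) zeta_iter n z).
Proof.
rewrite /= (bigD1 y) //= (eq_bigl (fun z => (z < y)%O)) // => z.
by rewrite lt_neqAle andbC.
Qed.

Hypothesis hh : is_height h.

Lemma zeta_iter_interpolant (y : P) : exists W : {poly Qq},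
  [/\ (size W <= (h y).+1)%N, forall n, W.[qvar ^+ n] = zeta_iter n y &
      W.[qvar^-1] = qvar ^- h \bot%O * (mobius \bot%O y)%:~R].
Proof.
have [m] := ubnP (card_below y); elim: m y => [//|m IHm] y; rewrite ltnS => ym.
have /fin_all_exists [Wz HWz] : forall z, exists W : {poly Qq}, (z < y)%O ->
    [/\ (size W <= (h z).+1)%N, forall n, W.[qvar ^+ n] = zeta_iter n z &
        W.[qvar^-1] = qvar ^- h \bot%O * (mobius \bot%O z)%:~R].
  move=> z; have [zy|_] := boolP (z < y)%O; last by exists 0.
  by have [W HW] := IHm z (leq_trans (card_below_lt zy) ym); exists W.
pose G := \sum_(z | (z < y)%O) Wz z.
have size_G : (size G <= h y)%N.
  rewrite /G; elim/big_ind: _ => [|p1 p2 s1 s2|z zy]; first by rewrite size_poly0.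
    by rewrite (leq_trans (size_polyD _ _)) // geq_max s1 s2.
  by have [sW _ _] := HWz z zy; apply: leq_trans sW (height_lt hh zy).
have qexp_neq i : (i < h y)%N -> qvar ^+ i != qvar ^+ h y.
  by move=> iy; apply/eqP => /qvar_expn_inj E; rewrite E ltnn in iy.
have [W [size_W W1 WS]] := qdifference_eq_solvable qexp_neq (zeta_iter 0 y) size_G.
have W_rec t : W.[qvar * t] = qvar ^+ h y * (W.[t] + \sum_(z | (z < y)%O) (Wz z).[t]).
  by rewrite WS /G horner_sum.
exists W; split=> //.
- elim=> [|n IHn]; first by rewrite expr0 W1.
  rewrite exprS W_rec IHn zeta_iterS_split; congr (_ * (_ + _)).
  by apply: eq_bigr => z zy; have [_ -> _] := HWz z zy.
apply: mobius_bot_of_rec; transitivity W.[qvar * qvar^-1].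
  by rewrite mulfV ?qvar_neq0 // W1.
rewrite W_rec; congr (_ * (_ + _)).
by apply: eq_bigr => z zy; have [_ _ ->] := HWz z zy.
Qed.

End BoundedPOrder.

Unset Implicit Arguments. Set Strict Implicit. Set Printing Implicit Defensive.
Local Close Scope ring_scope.

Theorem mainTheorem14 (disp : Order.disp_t) (P : finTBPOrderType disp)
  (h : P -> nat) (hh : is_height h) :
  (exists Z : {poly Qq}, is_qZeta h Z) /\
  (forall Z : {poly Qq}, is_qZeta h Z ->
     (Z.[qint (-1)%R] =
       qvar ^ (- (h (\bot%O : P) + h (\top%O : P))%:Z)%R
         * (mobius (\bot%O : P) (\top%O : P))%:~R)%R).
Proof.
have [W [_ W_qexp W_qinv]] := zeta_iter_interpolant hh \top%O.
pose Z0 := (qvar ^- h \top%O *: (W \Po qshift))%R.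
have Z0_qZeta : is_qZeta h Z0.
  case=> [//|n] _; rewrite hornerZ horner_comp horner_qshift W_qexp.
  by rewrite zeta_iterS_chain_sum mulKf ?expf_neq0 ?qvar_neq0 // multichain_sum_top.
split; first by exists Z0.
move=> Z Z_qZeta; have -> : Z = Z0.
  apply/eqP; rewrite -subr_eq0; apply/eqP.
  apply: (@poly_eq0_on_injective _ _ (fun n => qint (n + 2)%N%:Z)).
    by move=> m n /qint_nat_inj /addIn.
  by move=> n; rewrite rootE hornerD hornerN Z_qZeta ?Z0_qZeta ?leq_addl ?subrr.
rewrite hornerZ horner_comp horner_qshift exprN1 W_qinv.
by rewrite -exprnN exprD invfM; ring.
Qed.
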